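(* Let $W$ be an affine Weyl group, $x\in W$, and let $r_1,\dots,r_n$ be reflections with $H_{r_t}=H_{\alpha,c+t}$ ($1\le t\le n$) for some root $\alpha$ and $c\in\mathbb{Z}$, such that $\ell(r_t\cdots r_1x)>\ell(r_{t-1}\cdots r_1x)$ for all $1\le t\le n$. Then $H^{\mathbf 1}_{r_{t-1}}\subseteq H^{\mathbf 1}_{r_t}$ for all $3\le t\le n$.
   Context: $W$ is the affine Weyl group of a crystallographic root system $\Phi$ in Euclidean space $E$; for $\beta\in\Phi$, $k\in\mathbb{Z}$, $H_{\beta,k}=\{v:\langle v,\beta\rangle=k\}$ and $s_{\beta;k}$ is the orthogonal reflection in it; these are the reflections of $W$, and $H_r$ denotes the hyperplane of the reflection $r$. Elements of $W$ are identified with alcoves ($w\mapsto wA_0$, $A_0$ the fundamental alcove, identified with $1$). $\ell$ is Coxeter length. For a reflection $r$, $H^{\mathbf 1}_r=\{y\in W:\ell(ry)>\ell(y)\}$ is the set of alcoves on the same side of $H_r$ as the identity alcove, and $H^\infty_r=\{y\in W:\ell(ry)<\ell(y)\}$ is the other side. *)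

From HB Require Import structures.
From mathcomp Require Import all_boot all_order all_algebra.
From mathcomp Require Import boolp reals.
Set Implicit Arguments. Unset Strict Implicit. Unset Printing Implicit Defensive.
Import Order.TTheory GRing.Theory Num.Theory.
Local Open Scope ring_scope.

Section AffineWeyl.
Variables (R : realType) (d : nat).
Notation E := 'rV[R]_d.

Definition dot (u v : E) : R := (u *m v^T) 0 0.

Definition refl (beta : E) (k : int) (v : E) : E :=
  v - ((2 * (dot v beta - k%:~R)) / dot beta beta) *: beta.

Definition root_system (Phi : seq E) : Prop :=
  [/\ forall b, b \in Phi -> b != 0,
      forall a b, a \in Phi -> b \in Phi -> refl a 0 b \in Phi,
      forall a b, a \in Phi -> b \in Phi ->
        exists z : int, 2 * dot b a / dot a a = z%:~R,
      forall a (c : R), a \in Phi -> c *: a \in Phi -> c = 1 \/ c = -1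
    & (<<Phi>>%VS == fullv)].

Definition word_map (s : seq (E * int)) : E -> E :=
  foldr (fun bk f => refl bk.1 bk.2 \o f) id s.

Definition inW (Phi : seq E) (w : E -> E) : Prop :=
  exists s : seq (E * int), all (fun bk => bk.1 \in Phi) s /\ w = word_map s.

Definition regular (Phi : seq E) (p : E) : Prop :=
  forall b (k : int), b \in Phi -> dot p b != k%:~R.

(* q lies in the closure of the alcove containing the regular point p *)
Definition in_closure (Phi : seq E) (p q : E) : Prop :=
  forall b (k : int), b \in Phi -> 0 <= (dot q b - k%:~R) * (dot p b - k%:~R).

(* p is a point of the fundamental alcove A_0: p is regular and 0 lies in the
   closure of its alcove (i.e. 0 < <p,b> < 1 for every root b with <p,b> > 0) *)
Definition fundamental_point (Phi : seq E) (p : E) : Prop :=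
  regular Phi p /\ in_closure Phi p 0.

(* H_{beta,k} is a wall of the alcove A_0 containing p *)
Definition wall (Phi : seq E) (p : E) (b : E) (k : int) : Prop :=
  b \in Phi /\
  exists q : E, [/\ dot q b = k%:~R, in_closure Phi p q &
     forall g (m : int), g \in Phi -> dot q g = m%:~R ->
       forall v : E, dot v g = m%:~R <-> dot v b = k%:~R].

(* words in the simple reflections (reflections in the walls of A_0) *)
Definition simple_word (Phi : seq E) (p : E) (s : seq (E * int)) : Prop :=
  forall bk, bk \in s -> wall Phi p bk.1 bk.2.

Definition has_word_of_size (Phi : seq E) (p : E) (w : E -> E) (m : nat) : bool :=
  `[< exists s, simple_word Phi p s /\ size s = m /\ w = word_map s >].

Definition ell (Phi : seq E) (p : E) (w : E -> E) : nat :=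
  match pselect (exists m, has_word_of_size Phi p w m) with
  | left h => ex_minn h
  | right _ => 0%N
  end.

Fixpoint prodr (r : nat -> E -> E) (t : nat) : E -> E :=
  match t with 0%N => id | t'.+1 => r t'.+1 \o prodr r t' end.

Definition H1 (Phi : seq E) (p : E) (r : E -> E) (y : E -> E) : Prop :=
  inW Phi y /\ (ell Phi p y < ell Phi p (r \o y))%N.

End AffineWeyl.

From HB Require Import structures.
From mathcomp Require Import all_boot all_order all_algebra.
From mathcomp Require Import boolp reals.
From mathcomp Require Import ring lra zify.
Import Order.TTheory GRing.Theory Num.Theory.
Local Open Scope ring_scope.
Set Implicit Arguments. Unset Strict Implicit.

(* Let z be a product of simple reflections and s the reflection in H_{b,k}.
   Then l(s z) > l(z) exactly when the alcoves z A_0 and A_0 lie on the same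
   side of H_{b,k}: a hyperplane separating them is the hyperplane of a wall
   crossed by the gallery of a word for z (exchange condition), so s z has a
   shorter word, and the converse is the same argument applied to s z.
   Along x, r_1 x, r_2 r_1 x, ... each r_t thus reflects the current alcove
   across H_{alpha,c+t} away from A_0.  Three consecutive such crossings of the
   parallel hyperplanes H_{alpha,c+t-2}, H_{alpha,c+t-1}, H_{alpha,c+t} force
   <p_0,alpha> < c+t-2, so A_0 lies below H_{alpha,c+t-1} and H_{alpha,c+t},
   and every alcove on the side of A_0 of the first is on its side of the
   second. *)

Section RealSigns.
Variable R : realDomainType.
Implicit Types a b c P Y k : R.

Lemma mul_lt0_sign_transfer a b c : a != 0 -> 0 <= b * a -> b * c < 0 -> a * c < 0.
Proof.
move=> a_neq0; have : 0 < a ^+ 2 by rewrite exprn_even_gt0 //= a_neq0 orbT.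
nra.
Qed.

Lemma eq0_of_mul_ge0_opposite a b c : 0 <= a * b -> 0 <= a * c -> b * c < 0 -> a = 0.
Proof.
move=> ab ac bc; apply/eqP/negPn/negP => a_neq0.
have : 0 < a ^+ 2 by rewrite exprn_even_gt0 //= a_neq0 orbT.
nra.
Qed.

Lemma lt_level_of_three_crossings a0 a1 a2 P k :
  a1 = 2 * k - a0 -> a2 = 2 * (k + 1) - a1 ->
  0 < (a0 - k) * (P - k) -> 0 < (a1 - (k + 1)) * (P - (k + 1)) ->
  0 < (a2 - (k + 1 + 1)) * (P - (k + 1 + 1)) -> P < k.
Proof.
by move=> -> ->; case: (ltgtP a0 k) => [||->] *; nra.
Qed.

Lemma same_side_of_lt_levels Y P k1 k2 : P < k1 -> k1 <= k2 ->
  0 < (Y - k1) * (P - k1) -> 0 < (Y - k2) * (P - k2).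
Proof.
move=> P_lt k12 same_side; have Y_lt : Y < k1 by nra.
nra.
Qed.

End RealSigns.

Section Euclidean.
Variables (R : realType) (d : nat).
Local Notation E := 'rV[R]_d.
Implicit Types (u v w b e : E) (j k : int).

Lemma dotC u v : dot u v = dot v u.
Proof. by rewrite /dot -[u *m _]trmxK trmx_mul trmxK mxE. Qed.

Lemma dotDl u w v : dot (u + w) v = dot u v + dot w v.
Proof. by rewrite /dot mulmxDl mxE. Qed.

Lemma dotZl a u v : dot (a *: u) v = a * dot u v.
Proof. by rewrite /dot -scalemxAl mxE. Qed.

Lemma dotBl u w v : dot (u - w) v = dot u v - dot w v.
Proof. by rewrite dotDl -scaleN1r dotZl mulN1r. Qed.

Lemma dotDr u w v : dot v (u + w) = dot v u + dot v w.
Proof. by rewrite dotC dotDl !(dotC v). Qed.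

Lemma dotBr u w v : dot v (u - w) = dot v u - dot v w.
Proof. by rewrite dotC dotBl !(dotC v). Qed.

Lemma dotZr a u v : dot v (a *: u) = a * dot v u.
Proof. by rewrite dotC dotZl dotC. Qed.

Lemma dot_self_gt0 v : v != 0 -> 0 < dot v v.
Proof.
move=> v_neq0; have dotE : dot v v = \sum_i v 0 i ^+ 2.
  by rewrite /dot mxE; apply: eq_bigr => i _; rewrite mxE expr2.
rewrite dotE lt_def psumr_eq0 => [|i _]; last exact: sqr_ge0.
rewrite sumr_ge0 ?andbT => [|i _]; last exact: sqr_ge0.
apply: contra v_neq0 => /allP v_eq0; apply/eqP/rowP => i.
by have /implyP/(_ isT) := v_eq0 i (mem_index_enum i); rewrite sqrf_eq0 mxE => /eqP.
Qed.

Lemma dot_self_neq0 v : v != 0 -> dot v v != 0.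
Proof. by move/dot_self_gt0; rewrite lt0r => /andP[]. Qed.

Lemma dot_refl b j v w :
  dot (refl b j v) w = dot v w - (2 * (dot v b - j%:~R)) / dot b b * dot b w.
Proof. by rewrite /refl dotBl dotZl. Qed.

Lemma dot_refl_self b j v : b != 0 -> dot (refl b j v) b = 2 * j%:~R - dot v b.
Proof. by move=> /dot_self_neq0 bb_neq0; rewrite dot_refl; field. Qed.

Lemma reflK b j : b != 0 -> involutive (refl b j).
Proof.
move=> /dot_self_neq0 bb_neq0 v; rewrite [in LHS]/refl dot_refl.
by apply/rowP => i; rewrite !mxE; field.
Qed.

Lemma refl_triple b k : b != 0 ->
  refl b k = refl b (k + 1) \o refl b (k + 2) \o refl b (k + 1).
Proof.
move=> /dot_self_neq0 bb_neq0; apply: funext => v /=.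
rewrite /refl !(dotBl, dotZl) !rmorphD /=.
by apply/rowP => i; rewrite !mxE; field.
Qed.

Definition level b k v : R := dot v b - k%:~R.

Lemma level_refl b k v : b != 0 -> level b k (refl b k v) = - level b k v.
Proof. by move=> b_neq0; rewrite /level dot_refl_self //; ring. Qed.

Lemma level_refl_conj b e j k (m : int) v : b != 0 -> m%:~R = 2 * dot e b / dot b b ->
  level e k (refl b j v) = level (refl b 0 e) (k - m * j) v.
Proof.
move=> /dot_self_neq0 bb_neq0 me; rewrite /level dot_refl /refl dotBr dotZr.
by rewrite rmorphB rmorphM /= me subr0 (dotC b e) (dotC v b); field.
Qed.

Lemma refl_conj b e j k (m : int) : b != 0 -> e != 0 -> m%:~R = 2 * dot e b / dot b b ->
  refl e k \o refl b j = refl b j \o refl (refl b 0 e) (k - m * j).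
Proof.
move=> /dot_self_neq0 bb_neq0 /dot_self_neq0 ee_neq0 me; apply: funext => v /=.
rewrite /refl !(dotBr, dotBl, dotZr, dotZl) !subr0 (dotC b e).
apply/rowP => i; rewrite !mxE rmorphB rmorphM /= me; field.
rewrite bb_neq0 ee_neq0 andbT /=.
by rewrite (_ : _ - _ - _ = dot e e * dot b b) ?mulf_neq0 //; ring.
Qed.

Lemma refl_eq_of_hyperplane_eq b e j k : b != 0 -> e != 0 ->
  (forall v, dot v e = k%:~R <-> dot v b = j%:~R) -> refl e k = refl b j.
Proof.
move=> b_neq0 e_neq0 same_hyp; have bb_neq0 := dot_self_neq0 b_neq0.
pose q := (j%:~R / dot b b) *: b.
have qb : dot q b = j%:~R by rewrite /q dotZl divfK.
pose l := dot e b / dot b b; pose w := e - l *: b.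
have wb : dot w b = 0 by rewrite /w dotBl dotZl divfK // subrr.
have we : dot w e = 0.
  have /same_hyp : dot (q + w) b = j%:~R by rewrite dotDl wb addr0.
  have /same_hyp : dot q b = j%:~R by [].
  by rewrite dotDl => -> /eqP; rewrite -subr_eq0 addrC addKr => /eqP.
have e_lb : e = l *: b.
  apply/eqP; rewrite -subr_eq0 -/w; apply/negPn/negP => /dot_self_gt0.
  by rewrite {2}/w dotBr dotZr we wb mulr0 subr0 ltxx.
have l_neq0 : l != 0 by apply: contraNneq e_neq0 => l0; rewrite e_lb l0 scale0r.
have kl : k%:~R = l * j%:~R.
  by have /same_hyp : dot q b = j%:~R by []; rewrite e_lb dotZr qb => <-.
apply: funext => v; rewrite /refl kl e_lb !(dotZr, dotZl).
by apply/rowP => i; rewrite !mxE; field; rewrite l_neq0 bb_neq0.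
Qed.

End Euclidean.

Section Alcoves.
Variables (R : realType) (d : nat) (Phi : seq 'rV[R]_d).
Local Notation E := 'rV[R]_d.
Hypothesis HPhi : root_system Phi.
Implicit Types (v b e : E) (j k : int) (s : seq (E * int)).

Lemma root_neq0 b : b \in Phi -> b != 0.
Proof. by case: HPhi => root_nz *; apply: root_nz. Qed.

Lemma refl_root_in b e : b \in Phi -> e \in Phi -> refl b 0 e \in Phi.
Proof. by case: HPhi => _ refl_in *; apply: refl_in. Qed.

Lemma root_cartan_int b e : b \in Phi -> e \in Phi ->
  exists m : int, m%:~R = 2 * dot e b / dot b b.
Proof. by case: HPhi => _ _ cartan _ _ /cartan c /c[m me]; exists m. Qed.

Lemma refl_conj_root b e j k : b \in Phi -> e \in Phi ->
  exists e' k', [/\ e' \in Phi, forall v, level e k (refl b j v) = level e' k' v &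
                    refl e k \o refl b j = refl b j \o refl e' k'].
Proof.
move=> bP eP; have [m me] := root_cartan_int bP eP.
exists (refl b 0 e), (k - m * j); split; first exact: refl_root_in.
- by move=> v; apply: level_refl_conj (root_neq0 bP) me.
- exact: refl_conj (root_neq0 bP) (root_neq0 eP) me.
Qed.

Lemma regular_refl p b j : b \in Phi -> regular Phi p -> regular Phi (refl b j p).
Proof.
move=> bP p_reg e k eP; have [e' [k' [e'P level_e' _]]] := refl_conj_root j k bP eP.
by rewrite -subr_eq0 -[_ - _]/(level e k _) level_e' subr_eq0; apply: p_reg.
Qed.

Variable p0 : E.

Lemma simple_word_cons bk s :
  simple_word Phi p0 (bk :: s) <-> wall Phi p0 bk.1 bk.2 /\ simple_word Phi p0 s.
Proof.
split=> [ws | [w_bk ws] bk']; last by rewrite inE => /predU1P[-> | /ws].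
by split=> [|bk' bk'_s]; apply: ws; rewrite inE ?eqxx ?bk'_s ?orbT.
Qed.

Lemma regular_word_map s :
  regular Phi p0 -> simple_word Phi p0 s -> regular Phi (word_map s p0).
Proof.
move=> p0_reg; elim: s => [//| [b j] s IH] /simple_word_cons[[bP _] ws] /=.
exact: regular_refl bP (IH ws).
Qed.

Lemma wall_refl_of_separating b j e k : wall Phi p0 b j -> e \in Phi ->
  level e k (refl b j p0) * level e k p0 < 0 -> refl e k = refl b j.
Proof.
move=> [bP [q [qb q_cl q_hyp]]] eP separates.
have [e' [k' [e'P level_e' _]]] := refl_conj_root j k bP eP.
have q_fix : refl b j q = q by rewrite /refl qb subrr mulr0 mul0r scale0r subr0.
have cl_e : 0 <= level e k q * level e k p0 := q_cl e k eP.
have cl_e' : 0 <= level e k q * level e k (refl b j p0).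
  by rewrite -{1}q_fix !level_e'; apply: q_cl.
have /eqP : level e k q = 0.
  by apply: eq0_of_mul_ge0_opposite cl_e cl_e' _; rewrite mulrC.
rewrite subr_eq0 => /eqP qe.
exact: refl_eq_of_hyperplane_eq (root_neq0 bP) (root_neq0 eP) (q_hyp e k eP qe).
Qed.

(* The exchange condition: a hyperplane separating A_0 from the alcove of a
   word is the hyperplane of a wall crossed by the gallery of that word. *)
Lemma separating_refl_shortens s e k : regular Phi p0 -> simple_word Phi p0 s ->
  e \in Phi -> level e k (word_map s p0) * level e k p0 < 0 ->
  exists s', [/\ simple_word Phi p0 s', (size s' < size s)%N &
                 word_map s' = refl e k \o word_map s].
Proof.
move=> p0_reg; elim: s e k => [|[b j] s IH] e k /=.
  by move=> _ _; rewrite -expr2 ltNge sqr_ge0.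
move=> /simple_word_cons[w_bj ws] eP; have bP : b \in Phi by case: w_bj.
have [e' [k' [e'P level_e' conj]]] := refl_conj_root j k bP eP.
rewrite level_e' => separates.
have [sep' | same'] := ltP (level e' k' (word_map s p0) * level e' k' p0) 0.
  have [s' [ws' size_s' word_s']] := IH e' k' ws e'P sep'.
  exists ((b, j) :: s'); split => //; first exact/simple_word_cons.
  by rewrite /= word_s' -[LHS]/((refl b j \o refl e' k') \o word_map s) -conj.
have p0_e' : level e' k' p0 != 0 by rewrite subr_eq0; apply: p0_reg.
have := mul_lt0_sign_transfer p0_e' same' separates.
rewrite -level_e' => /(wall_refl_of_separating w_bj eP) ->.
by exists s; split => //; apply: funext => v /=; rewrite reflK ?(root_neq0 bP).
Qed.

(* [ell w] is 0 when [w] is not a product of simple reflections, so every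
   element whose length matters is first shown to be one. *)
Definition simple_prod (w : E -> E) : Prop :=
  exists s, simple_word Phi p0 s /\ w = word_map s.

Lemma ell_word_map_le s : simple_word Phi p0 s -> (ell Phi p0 (word_map s) <= size s)%N.
Proof.
move=> ws; rewrite /ell; case: pselect => [ex | []].
  by case: ex_minnP => m _; apply; apply/asboolP; exists s.
by exists (size s); apply/asboolP; exists s.
Qed.

Lemma ell_reduced_word w : simple_prod w ->
  exists s, [/\ simple_word Phi p0 s, size s = ell Phi p0 w & w = word_map s].
Proof.
move=> [s0 [ws0 ->]]; rewrite /ell; case: pselect => [ex | []].
  by case: ex_minnP => m /asboolP[s [ws [size_s ->]]] _; exists s.
by exists (size s0); apply/asboolP; exists s0.
Qed.

Lemma simple_prod_of_ell_gt0 w : (0 < ell Phi p0 w)%N -> simple_prod w.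
Proof.
by rewrite /ell; case: pselect => // ex; case: ex_minnP => m /asboolP[s [ws [_ ->]]]; exists s.
Qed.

Lemma word_map_cat s1 s2 : word_map (s1 ++ s2) = word_map s1 \o word_map s2.
Proof. by apply: funext => v; elim: s1 => //= bk s1 <-. Qed.

Lemma word_map_revK s : simple_word Phi p0 s -> cancel (word_map s) (word_map (rev s)).
Proof.
elim: s => // [[b j] s IH] /simple_word_cons[[bP _] ws] v.
by rewrite rev_cons -cats1 word_map_cat /= reflK ?root_neq0 ?IH.
Qed.

Lemma simple_word_rev s : simple_word Phi p0 s -> simple_word Phi p0 (rev s).
Proof. by move=> ws bk; rewrite mem_rev; apply: ws. Qed.

Lemma simple_prod_comp f g : simple_prod f -> simple_prod g -> simple_prod (f \o g).
Proof.
move=> [s1 [ws1 ->]] [s2 [ws2 ->]]; exists (s1 ++ s2); rewrite word_map_cat.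
by split=> // bk; rewrite mem_cat => /orP[/ws1 | /ws2].
Qed.

Lemma simple_prod_cancel f g : simple_prod (f \o g) -> simple_prod g -> simple_prod f.
Proof.
move=> fg_sp [s [ws g_s]]; have -> : f = (f \o g) \o word_map (rev s).
  by apply: funext => v /=; rewrite g_s -{1}[v](word_map_revK (simple_word_rev ws)) revK.
by apply: simple_prod_comp fg_sp _; exists (rev s); split=> //; apply: simple_word_rev.
Qed.

Lemma simple_prod_refl_comp b k z : b \in Phi -> simple_prod (refl b k) ->
  simple_prod (refl b k \o z) <-> simple_prod z.
Proof.
move=> bP refl_sp; split; last exact: simple_prod_comp.
move=> rz_sp; have -> : z = refl b k \o (refl b k \o z).
  by apply: funext => v /=; rewrite reflK ?root_neq0.
exact: simple_prod_comp.
Qed.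

Lemma ell_refl_gtP z e k : regular Phi p0 -> e \in Phi ->
  simple_prod z -> simple_prod (refl e k \o z) ->
  (ell Phi p0 z < ell Phi p0 (refl e k \o z))%N <-> 0 < level e k (z p0) * level e k p0.
Proof.
move=> p0_reg eP z_sp rz_sp; split=> [lt_ell | same_side].
  have [s [ws size_s z_s]] := ell_reduced_word z_sp.
  rewrite lt_def mulf_neq0 ?subr_eq0 ?z_s ?(regular_word_map p0_reg ws) ?p0_reg //=.
  rewrite leNgt; apply: contraL lt_ell => /(separating_refl_shortens p0_reg ws eP).
  case=> s' [ws' size_s' s'_rz]; rewrite -leqNgt -size_s z_s -s'_rz.
  exact: leq_trans (ell_word_map_le ws') (ltnW size_s').
have [s [ws size_s rz_s]] := ell_reduced_word rz_sp.
have : level e k (word_map s p0) * level e k p0 < 0.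
  by rewrite -rz_s /= level_refl ?root_neq0 // mulNr oppr_lt0.
case/(separating_refl_shortens p0_reg ws eP) => s' [ws' size_s' s'_z].
rewrite -size_s; have -> : z = word_map s'.
  by rewrite s'_z -rz_s; apply: funext => v /=; rewrite reflK ?root_neq0.
by apply: leq_ltn_trans size_s'; apply: ell_word_map_le.
Qed.

End Alcoves.

Section ReflectionChain.
Variables (R : realType) (d : nat) (Phi : seq 'rV[R]_d) (p0 : 'rV[R]_d).
Local Notation E := 'rV[R]_d.
Hypotheses (HPhi : root_system Phi) (p0_reg : regular Phi p0).
Variables (x : E -> E) (n : nat) (r : nat -> E -> E) (alpha : E) (c : int).
Hypothesis alphaP : alpha \in Phi.
Hypothesis r_alpha : forall t, (1 <= t <= n)%N -> r t = refl alpha (c + t%:Z).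
Hypothesis ell_chain : forall t, (1 <= t <= n)%N ->
  (ell Phi p0 (prodr r t.-1 \o x) < ell Phi p0 (prodr r t \o x))%N.
Hypothesis n_ge3 : (3 <= n)%N.

Local Notation simple_prod := (simple_prod Phi p0).

Lemma chain_simple_prod_pos t : (1 <= t <= n)%N -> simple_prod (prodr r t \o x).
Proof. by move=> /ell_chain lt_ell; apply: simple_prod_of_ell_gt0 (leq_ltn_trans _ lt_ell). Qed.

Lemma chain_refl_simple_prod t : (1 <= t <= n)%N -> simple_prod (r t).
Proof.
have step_sp u : (2 <= u <= n)%N -> simple_prod (r u).
  case: u => // u u_bd; apply: (simple_prod_cancel HPhi (g := prodr r u \o x)).
    by apply: (chain_simple_prod_pos (t := u.+1)); lia.
  by apply: chain_simple_prod_pos; lia.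
move=> t_bd; have [t_gt1 | t_le1] := ltnP 1 t; first by apply: step_sp; lia.
have -> : t = 1 by lia.
have -> : r 1 = r 2 \o r 3 \o r 2.
  rewrite !r_alpha; try lia.
  by rewrite (refl_triple _ (root_neq0 HPhi alphaP)) -!addrA.
by apply: simple_prod_comp; [apply: simple_prod_comp|]; apply: step_sp; lia.
Qed.

Lemma chain_simple_prod t : (t <= n)%N -> simple_prod (prodr r t \o x).
Proof.
case: t => [_ | t t_bd]; last by apply: chain_simple_prod_pos; lia.
have r1_sp : simple_prod (r 1) by apply: chain_refl_simple_prod; lia.
rewrite r_alpha in r1_sp; last lia.
rewrite -(simple_prod_refl_comp HPhi _ alphaP r1_sp) -r_alpha; last lia.
by apply: (chain_simple_prod_pos (t := 1)); lia.
Qed.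

Lemma chain_same_side t : (t < n)%N ->
  0 < level alpha (c + t.+1%:Z) (prodr r t (x p0)) * level alpha (c + t.+1%:Z) p0.
Proof.
move=> t_lt; have r_t := r_alpha (t := t.+1) ltac:(lia).
have := ell_chain (t := t.+1) ltac:(lia).
rewrite [prodr r t.+1]/= r_t -[_ \o _ \o _]/(refl _ _ \o (prodr r t \o x)).
apply: (iffLR (ell_refl_gtP HPhi p0_reg alphaP _ _)).
  by apply: chain_simple_prod; lia.
by rewrite -r_t; apply: (chain_simple_prod_pos (t := t.+1)); lia.
Qed.

Lemma chain_level_lt t : (2 <= t < n)%N -> dot p0 alpha < (c + t%:Z)%:~R.
Proof.
case: t => [|[|m]] // m_bd.
have levelS (i : nat) : ((c + i.+1%:Z)%:~R : R) = (c + i%:Z)%:~R + 1.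
  by rewrite -addn1 PoszD addrA rmorphD.
have point_refl (i : nat) : (i < n)%N -> dot (prodr r i.+1 (x p0)) alpha =
    2 * (c + i.+1%:Z)%:~R - dot (prodr r i (x p0)) alpha.
  by move=> i_lt; rewrite /= r_alpha ?dot_refl_self ?(root_neq0 HPhi) //; lia.
have := chain_same_side (t := m); have := chain_same_side (t := m.+1).
have := chain_same_side (t := m.+2); rewrite /level (levelS m.+2) (levelS m.+1).
move=> /(_ ltac:(lia)) same3 /(_ ltac:(lia)) same2 /(_ ltac:(lia)) same1.
have := point_refl m.+1 ltac:(lia); have := point_refl m ltac:(lia); rewrite (levelS m.+1).
move=> /lt_level_of_three_crossings crossings /crossings/(_ same1 same2 same3) P_lt.
by apply: (lt_trans P_lt); rewrite ltrDl ltr01.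
Qed.

End ReflectionChain.

Theorem proposition4p1 (R : realType) (d : nat) (Phi : seq 'rV[R]_d)
  (p0 : 'rV[R]_d) (HPhi : root_system Phi) (Hp0 : fundamental_point Phi p0)
  (x : 'rV[R]_d -> 'rV[R]_d) (hx : inW Phi x)
  (n : nat) (r : nat -> 'rV[R]_d -> 'rV[R]_d) (alpha : 'rV[R]_d) (c : int)
  (halpha : alpha \in Phi)
  (hr : forall t : nat, (1 <= t <= n)%N -> r t = refl alpha (c + t%:Z))
  (hlen : forall t : nat, (1 <= t <= n)%N ->
     (ell Phi p0 (prodr r t.-1 \o x) < ell Phi p0 (prodr r t \o x))%N) :
  forall t : nat, (3 <= t <= n)%N ->
    forall y : 'rV[R]_d -> 'rV[R]_d, H1 Phi p0 (r t.-1) y -> H1 Phi p0 (r t) y.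
Proof.
have p0_reg : regular Phi p0 by case: Hp0.
move=> t /andP[t_ge3 t_le_n] y [y_W lt_ell]; split=> //.
have n_ge3 : (3 <= n)%N by apply: leq_trans t_le_n.
have r_sp u : (1 <= u <= n)%N -> simple_prod Phi p0 (refl alpha (c + u%:Z)).
  by move=> u_bd; rewrite -hr //; apply: (chain_refl_simple_prod HPhi halpha hr hlen n_ge3).
rewrite !hr in lt_ell *; try lia.
have ry_sp := simple_prod_of_ell_gt0 (leq_ltn_trans (leq0n _) lt_ell).
have y_sp : simple_prod Phi p0 y.
  by rewrite -(simple_prod_refl_comp HPhi _ halpha (r_sp t.-1 _)) //; lia.
rewrite (ell_refl_gtP HPhi p0_reg halpha y_sp ry_sp) in lt_ell.
apply/(ell_refl_gtP HPhi p0_reg halpha y_sp).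
  by apply/simple_prod_refl_comp => //; apply: r_sp; lia.
apply: same_side_of_lt_levels lt_ell.
  by apply: (chain_level_lt HPhi p0_reg halpha hr hlen n_ge3); lia.
by rewrite ler_int lerD2l; lia.
Qed.
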